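(* Let $q$ be a prime power with $4\mid(q-1)$, $n\ge1$, let $\mathscr{C}\subseteq\mathrm{GF}(q^2)^n$ be a scalable code and let $\mathscr{B}$ be a basis of $\mathrm{GF}(q^2)$ over $\mathrm{GF}(q)$. If $\mathrm{Im}_{\mathscr{B}}(\mathscr{C})\subseteq\mathrm{GF}(q)^{2n}$ is self-orthogonal w.r.t. the canonical inner product $\sum_{i=1}^{2n}x_iy_i$, then $\mathscr{C}$ is self-orthogonal w.r.t. the canonical inner product $\sum_{i=1}^n x_iy_i$ on $\mathrm{GF}(q^2)^n$.
   Context: $\mathrm{Tr}:\mathrm{GF}(q^2)\to\mathrm{GF}(q)$, $\mathrm{Tr}(a)=a+a^q$. The dual basis of a basis $\{\gamma_1,\gamma_2\}$ is the unique basis $\{\beta_1,\beta_2\}$ with $\mathrm{Tr}(\gamma_i\beta_j)=\delta_{ij}$. A code $\mathscr{C}\subseteq\mathrm{GF}(q^2)^n$ is scalable if $x\in\mathscr{C}\Rightarrow\alpha x\in\mathscr{C}$ for all $\alpha\in\mathrm{GF}(q^2)$. For a basis $\mathscr{B}$ with dual basis $\{\beta_1,\beta_2\}$, $\mathrm{Im}_{\mathscr{B}}(\mathscr{C})=\{(\mathrm{Tr}(\beta_1x_1),\ldots,\mathrm{Tr}(\beta_1x_n),\mathrm{Tr}(\beta_2x_1),\ldots,\mathrm{Tr}(\beta_2x_n)):x\in\mathscr{C}\}$. A code $D$ is self-orthogonal w.r.t. a form $g$ if $g(x,y)=0$ for all $x,y\in D$. *)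

From HB Require Import structures.
From mathcomp Require Import all_boot all_order all_algebra all_field.
Set Implicit Arguments. Unset Strict Implicit. Unset Printing Implicit Defensive.
Import GRing.Theory.
Local Open Scope ring_scope.

(* GF(q^2) is the finite field L with #|L| = q^2; GF(q) is realized as its
   unique subfield of order q, namely { a in L | a^q = a }. *)
Definition inGFq (L : finFieldType) (q : nat) (a : L) : bool := a ^+ q == a.

Definition Tr (L : finFieldType) (q : nat) (a : L) : L := a + a ^+ q.

Definition is_basis (L : finFieldType) (q : nat) (g1 g2 : L) : Prop :=
  (forall a b : L, inGFq q a -> inGFq q b -> a * g1 + b * g2 = 0 -> a = 0 /\ b = 0)
  /\ (forall x : L, exists a b : L, [/\ inGFq q a, inGFq q b & x = a * g1 + b * g2]).

Definition is_dual_basis (L : finFieldType) (q : nat) (g1 g2 b1 b2 : L) : Prop :=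
  [/\ Tr q (g1 * b1) = 1, Tr q (g1 * b2) = 0, Tr q (g2 * b1) = 0 & Tr q (g2 * b2) = 1].

Definition scalable_code (L : finFieldType) (n : nat) (C : {set 'rV[L]_n}) : Prop :=
  forall x, x \in C -> forall alpha : L, alpha *: x \in C.

Definition dotp (R : nzRingType) (m : nat) (x y : 'rV[R]_m) : R :=
  \sum_(i < m) x ord0 i * y ord0 i.

Definition self_orthogonal (R : finFieldType) (m : nat) (D : {set 'rV[R]_m}) : Prop :=
  forall x y, x \in D -> y \in D -> dotp x y = 0.

Definition imB_vec (L : finFieldType) (q n : nat) (b1 b2 : L) (x : 'rV[L]_n)
  : 'rV[L]_(n + n) :=
  row_mx (map_mx (fun a => Tr q (b1 * a)) x) (map_mx (fun a => Tr q (b2 * a)) x).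

Definition ImB (L : finFieldType) (q n : nat) (b1 b2 : L) (C : {set 'rV[L]_n})
  : {set 'rV[L]_(n + n)} := [set imB_vec q b1 b2 x | x in C].

(* Since Tr(u) Tr(v) = Tr(uv) + Tr(u v^q), the inner product of the images of
   a x and c y is Tr(a (c S <x, y> + c^q S' <x, y^q>)) with S = b1^2 + b2^2,
   S' = b1^(q+1) + b2^(q+1) and <x, y^q> the Hermitian form.  As C is
   scalable, this vanishes for all a and c, so nondegeneracy of the trace
   form gives c S <x, y> + c^q S' <x, y^q> = 0 for every c; comparing c = 1
   with some c outside GF(q) yields S <x, y> = 0.  Finally S <> 0: otherwise
   b1/b2 is a square root of -1, which lies in GF(q) because 4 | q - 1, and
   GF(q)-linearity of the trace contradicts Tr(g1 b1) = 1, Tr(g1 b2) = 0. *)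

From mathcomp Require Import all_boot all_order all_algebra all_field.
From mathcomp Require Import ring.
Local Open Scope ring_scope.
Import GRing.Theory.

Lemma pnat_pchar_card (F : finFieldType) (p k m : nat) :
  prime p -> #|F| = ((p ^ k) ^ m)%N -> [pchar F].-nat (p ^ k)%N.
Proof.
move=> p_pr cardF; rewrite pnatX pnatE //; apply/orP; left.
by apply: (@card_finPcharP _ p (k * m)) => //; rewrite cardF -expnM.
Qed.

Lemma exprq_sqrtN1 (R : nzRingType) (q : nat) (t : R) :
  (0 < q)%N -> (4 %| q.-1)%N -> t ^+ 2 = -1 -> t ^+ q = t.
Proof.
move=> q_gt0 /dvdnP[m q1E] t2N1.
have t4 : t ^+ 4 = 1 by rewrite (exprM t 2 2) t2N1 sqrrN expr1n.
by rewrite -(prednK q_gt0) q1E exprS mulnC exprM t4 expr1n mulr1.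
Qed.

Lemma Tr_nondegenerate (L : finFieldType) (q : nat) (u z : L) :
  Tr q u != 0 -> (forall a, Tr q (a * z) = 0) -> z = 0.
Proof.
move=> Tru_neq0 Tr_az; apply/eqP; apply: contraNT Tru_neq0 => z_neq0.
by rewrite -(divfK z_neq0 u) Tr_az.
Qed.

Section FrobeniusTrace.
Local Set Implicit Arguments.
Local Unset Strict Implicit.
Variables (L : finFieldType) (q : nat).
Hypothesis frobD : forall a b : L, (a + b) ^+ q = a ^+ q + b ^+ q.
Hypothesis frobK : forall a : L, a ^+ q ^+ q = a.

Lemma frob_gt0 : (0 < q)%N.
Proof.
by case: q frobK => // /(_ 0); rewrite !expr0 => /eqP; rewrite oner_eq0.
Qed.

Lemma GFq0 : inGFq q (0 : L).
Proof. by rewrite /inGFq expr0n gtn_eqF ?frob_gt0. Qed.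

Lemma GFq1 : inGFq q (1 : L).
Proof. by rewrite /inGFq expr1n. Qed.

Lemma GFqN (a : L) : inGFq q a -> inGFq q (- a).
Proof.
move=> /eqP aq; have := frobD a (- a); rewrite subrr (eqP GFq0) aq.
by move=> /esym/eqP; rewrite addrC addr_eq0.
Qed.

Lemma TrD (a b : L) : Tr q (a + b) = Tr q a + Tr q b.
Proof. by rewrite /Tr frobD; ring. Qed.

Lemma Tr0 : Tr q (0 : L) = 0.
Proof. by rewrite /Tr (eqP GFq0) addr0. Qed.

Lemma Tr_sum (I : finType) (f : I -> L) :
  Tr q (\sum_i f i) = \sum_i Tr q (f i).
Proof. exact: (big_morph _ TrD Tr0). Qed.

Lemma TrZ (t z : L) : inGFq q t -> Tr q (t * z) = t * Tr q z.
Proof. by move=> /eqP tq; rewrite /Tr exprMn tq mulrDr. Qed.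

Lemma TrM_Tr (u v : L) : Tr q u * Tr q v = Tr q (u * v) + Tr q (u * v ^+ q).
Proof. by rewrite /Tr !exprMn frobK; ring. Qed.

Lemma basis_notin_GFq (g1 g2 : L) :
  is_basis q g1 g2 -> exists beta : L, ~~ inGFq q beta.
Proof.
move=> [indep _]; case: (boolP (inGFq q g1)) => [g1q|]; last by exists g1.
case: (boolP (inGFq q g2)) => [g2q|]; last by exists g2.
have [_ /eqP] : g2 = 0 /\ - g1 = 0.
  by apply: indep => //; [exact: GFqN | rewrite mulNr mulrC subrr].
rewrite oppr_eq0 => /eqP g1_0.
have [] := indep _ _ GFq1 GFq0; last by move/eqP; rewrite oner_eq0.
by rewrite g1_0 mulr0 mul0r addr0.
Qed.

Lemma conj_linear_eq0 (beta P Q : L) :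
  ~~ inGFq q beta -> (forall c, c * P + c ^+ q * Q = 0) -> P = 0.
Proof.
move=> beta_notq PQ0; have := PQ0 1; rewrite expr1n !mul1r => /eqP.
rewrite addrC addr_eq0 => /eqP QE; have /eqP := PQ0 beta.
rewrite QE mulrN -mulrBl mulf_eq0 subr_eq0 eq_sym -/(inGFq q beta).
by rewrite (negbTE beta_notq) => /eqP.
Qed.

Lemma dual_sqr_sum_neq0 (g b1 b2 : L) : (4 %| q.-1)%N ->
  Tr q (g * b1) = 1 -> Tr q (g * b2) = 0 -> b1 ^+ 2 + b2 ^+ 2 != 0.
Proof.
move=> q4 Tr_gb1 Tr_gb2; apply/eqP => sum0.
have b2_neq0 : b2 != 0.
  apply: contra_eq_neq Tr_gb1 => b2_0; move: sum0.
  rewrite b2_0 expr0n addr0 => /eqP; rewrite sqrf_eq0 => /eqP ->.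
  by rewrite mulr0 Tr0 eq_sym oner_neq0.
have sqrtN1 : (b1 / b2) ^+ 2 = -1.
  by rewrite expr_div_n -[b1 ^+ 2]opprK (addr0_eq sum0) mulNr divff ?expf_neq0.
have /eqP := Tr_gb1; rewrite -(divfK b2_neq0 b1) mulrCA TrZ ?Tr_gb2 ?mulr0.
  by rewrite eq_sym oner_eq0.
by apply/eqP; apply: exprq_sqrtN1 frob_gt0 q4 sqrtN1.
Qed.

Variable n : nat.

Definition herm_dotp (x y : 'rV[L]_n) : L := \sum_(i < n) x ord0 i * y ord0 i ^+ q.

Lemma dotpZ (a c : L) (x y : 'rV[L]_n) :
  dotp (a *: x) (c *: y) = a * c * dotp x y.
Proof.
by rewrite /dotp mulr_sumr; apply: eq_bigr => i _; rewrite !mxE; ring.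
Qed.

Lemma herm_dotpZ (a c : L) (x y : 'rV[L]_n) :
  herm_dotp (a *: x) (c *: y) = a * c ^+ q * herm_dotp x y.
Proof.
by rewrite /herm_dotp mulr_sumr; apply: eq_bigr => i _; rewrite !mxE exprMn; ring.
Qed.

Lemma dotp_imB (b1 b2 : L) (x y : 'rV[L]_n) :
  dotp (imB_vec q b1 b2 x) (imB_vec q b1 b2 y) =
  Tr q ((b1 ^+ 2 + b2 ^+ 2) * dotp x y
        + (b1 * b1 ^+ q + b2 * b2 ^+ q) * herm_dotp x y).
Proof.
rewrite /dotp /herm_dotp !mulr_sumr.
rewrite -[in RHS]big_split /= Tr_sum big_split_ord /= -big_split /=.
apply: eq_bigr => i _; rewrite !row_mxEl !row_mxEr !mxE !TrM_Tr -!TrD.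
by congr (Tr q _); rewrite !exprMn; ring.
Qed.

End FrobeniusTrace.

Theorem proposition4 (q : nat) (L : finFieldType) (n : nat)
  (hq : exists p k : nat, prime p /\ q = (p ^ k)%N)
  (hL : #|L| = (q ^ 2)%N)
  (h4 : (4 %| q.-1)%N)
  (hn : (0 < n)%N)
  (C : {set 'rV[L]_n}) (hC : scalable_code C)
  (g1 g2 b1 b2 : L) (hB : is_basis q g1 g2) (hdual : is_dual_basis q g1 g2 b1 b2) :
  self_orthogonal (ImB q b1 b2 C) -> self_orthogonal C.
Proof.
move=> soImB x y Cx Cy.
have [p [k [p_pr qE]]] := hq.
have q_pchar : [pchar L].-nat q.
  by rewrite qE; apply: (@pnat_pchar_card _ _ _ 2 p_pr); rewrite -qE.
have frobD (a b : L) : (a + b) ^+ q = a ^+ q + b ^+ q := exprDn_pchar a b q_pchar.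
have frobK (a : L) : a ^+ q ^+ q = a by rewrite -exprM mulnn -hL expf_card.
have [beta beta_notq] := basis_notin_GFq frobD frobK hB.
have [Tr_g1b1 Tr_g1b2 _ _] := hdual.
have S_neq0 := dual_sqr_sum_neq0 frobK h4 Tr_g1b1 Tr_g1b2.
suff /eqP : (b1 ^+ 2 + b2 ^+ 2) * dotp x y = 0.
  by rewrite mulf_eq0 (negbTE S_neq0) => /eqP.
apply: (conj_linear_eq0 beta_notq
          (Q := (b1 * b1 ^+ q + b2 * b2 ^+ q) * herm_dotp q x y)) => c.
apply: (@Tr_nondegenerate _ q (g1 * b1)) => [|a]; first by rewrite Tr_g1b1 oner_neq0.
rewrite -(soImB (imB_vec q b1 b2 (a *: x)) (imB_vec q b1 b2 (c *: y))) ?imset_f ?hC //.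
by rewrite (dotp_imB frobD frobK) dotpZ herm_dotpZ; congr (Tr q _); ring.
Qed.
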